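(* Let $V\subset\mathbb{R}^d$ be a finite set of voters, $C\subset\mathbb{R}^d$ a finite set of candidates, $k\ge1$, $f\ge0$ integers and $\sigma\ge\sigma_f(C)$ a real number. Run the following algorithm: set $T\gets\emptyset$; while there exists $J\subseteq C$ with $|J|\le f$ and $\delta(T,J)>3\sigma$: set $T\gets T\setminus J$, and then, while there exists $v\in V$ with $d(v,T)>3\sigma$, choose a candidate $c\in C\setminus J$ with $d(v,c)\le\sigma$, set $T\gets T\cup\{c\}$ and $\mathsf{wit}[c]\gets v$; finally return $T$. If $T$ is the committee computed by this algorithm, then $d(\mathsf{wit}[c],\mathsf{wit}[c'])>2\sigma$ for any two distinct $c,c'\in T$.
   Context: Distances are Euclidean; $d(v,S)=\min_{c\in S}d(v,c)$ (with $d(v,\emptyset)=\infty$). For $S\subseteq C$, $\sigma_0(S)=\max_{v\in V}d(v,S)$. For a committee $T\subseteq C$ and failing set $J\subseteq C$, $\delta(T,J)=\min_{K\subseteq C\setminus J,\ |K|=|T\cap J|}\sigma_0((T\setminus J)\cup K)$, and $\sigma_f(T)=\max_{J\subseteq C,|J|\le f}\delta(T,J)$; in particular $\sigma_f(C)$ is this quantity for $T=C$. $\mathsf{wit}[c]$ denotes the value last assigned to $c$ by the algorithm. *)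

From HB Require Import structures.
From mathcomp Require Import all_boot all_order all_algebra.
From mathcomp Require Import finmap.
From mathcomp Require Import all_classical all_reals ereal.
Set Implicit Arguments. Unset Strict Implicit. Unset Printing Implicit Defensive.
Import Order.TTheory GRing.Theory Num.Theory.
Local Open Scope ring_scope.
Local Open Scope fset_scope.

Section Defs.
Variables (R : realType) (d : nat).
Notation pt := 'rV[R]_d.

Definition edist (x y : pt) : R := Num.sqrt (\sum_(i < d) (x ord0 i - y ord0 i) ^+ 2).

(* d(v,S) = min_{c in S} d(v,c), with d(v, emptyset) = +oo *)
Definition dset (v : pt) (S : {fset pt}) : \bar R :=
  \big[Order.min/+oo%E]_(c <- S) (edist v c)%:E.

(* sigma_0(S) = max_{v in V} d(v,S)  (0 if V is empty; distances are >= 0) *)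
Definition sigma0 (V S : {fset pt}) : \bar R :=
  \big[Order.max/0%E]_(v <- V) dset v S.

Definition delta (V C T J : {fset pt}) : \bar R :=
  \big[Order.min/+oo%E]_(K <- fpowerset (C `\` J) | #|` K| == #|` (T `&` J)|)
     sigma0 V ((T `\` J) `|` K).

Definition sigmaf (V C : {fset pt}) (f : nat) (T : {fset pt}) : \bar R :=
  \big[Order.max/0%E]_(J <- fpowerset C | (#|` J| <= f)%N) delta V C T J.

Definition upd (w : pt -> pt) (c v : pt) : pt -> pt :=
  fun x => if x == c then v else w x.

(* Relational (big-step) semantics of the algorithm; all nondeterministic
   choices are allowed.  State = (T, wit). *)

Inductive inner (V C J : {fset pt}) (sigma : R) :
    {fset pt} -> (pt -> pt) -> {fset pt} -> (pt -> pt) -> Prop :=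
| inner_stop T w :
    (forall v, v \in V -> (dset v T <= (3 * sigma)%:E)%E) ->
    inner V C J sigma T w T w
| inner_step T w v c T' w' :
    v \in V -> ((3 * sigma)%:E < dset v T)%E ->
    c \in C -> c \notin J -> edist v c <= sigma ->
    inner V C J sigma (c |` T) (upd w c v) T' w' ->
    inner V C J sigma T w T' w'.

Inductive outer (V C : {fset pt}) (f : nat) (sigma : R) :
    {fset pt} -> (pt -> pt) -> {fset pt} -> (pt -> pt) -> Prop :=
| outer_stop T w :
    (forall J : {fset pt}, J `<=` C -> (#|` J| <= f)%N ->
        (delta V C T J <= (3 * sigma)%:E)%E) ->
    outer V C f sigma T w T w
| outer_step T w J T1 w1 T' w' :
    J `<=` C -> (#|` J| <= f)%N -> ((3 * sigma)%:E < delta V C T J)%E ->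
    inner V C J sigma (T `\` J) w T1 w1 ->
    outer V C f sigma T1 w1 T' w' ->
    outer V C f sigma T w T' w'.

End Defs.

From HB Require Import structures.
From mathcomp Require Import all_boot all_order all_algebra.
From mathcomp Require Import finmap.
From mathcomp Require Import all_classical all_reals ereal.
From mathcomp Require Import ring lra.
Import Order.TTheory GRing.Theory Num.Theory.
Local Open Scope ring_scope.

(* The separation is an invariant of both loops: every c in T lies within
   sigma of wit[c], and the witnesses of distinct members of T are more than
   2 sigma apart.  Removing candidates preserves it, and the inner loop only
   adds a candidate c with witness v when v is more than 3 sigma away from
   every member c' of T; as wit[c'] is within sigma of c', the triangle
   inequality puts v more than 2 sigma away from wit[c'].  The hypotheses
   1 <= k and sigma >= sigma_f(C) only ensure that the algorithm can make its
   choices; the separation does not depend on them. *)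

Section CauchySchwarz.
Variables (R : realDomainType) (I : finType).

Lemma CauchySchwarz_sum (a b : I -> R) :
  (\sum_i a i * b i) ^+ 2 <= (\sum_i a i ^+ 2) * (\sum_i b i ^+ 2).
Proof.
have lagrange : \sum_i \sum_j (a i * b j - a j * b i) ^+ 2 =
    2 * ((\sum_i a i ^+ 2) * (\sum_i b i ^+ 2) - (\sum_i a i * b i) ^+ 2).
  have -> : 2 * ((\sum_i a i ^+ 2) * (\sum_i b i ^+ 2) - (\sum_i a i * b i) ^+ 2) =
      (\sum_i a i ^+ 2) * (\sum_j b j ^+ 2) + (\sum_i b i ^+ 2) * (\sum_j a j ^+ 2)
      - 2 * ((\sum_i a i * b i) * (\sum_j a j * b j)) by ring.
  rewrite !big_distrlr /= mulr_sumr -big_split -sumrB /=.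
  apply: eq_bigr => i _; rewrite mulr_sumr -big_split -sumrB /=.
  by apply: eq_bigr => j _; ring.
have : 0 <= \sum_i \sum_j (a i * b j - a j * b i) ^+ 2.
  by do 2!(apply: sumr_ge0 => ? _); exact: sqr_ge0.
by rewrite lagrange pmulr_rge0 // subr_ge0.
Qed.

End CauchySchwarz.

Section Minkowski.
Variables (R : rcfType) (I : finType).

Lemma Minkowski_sum (a b : I -> R) :
  Num.sqrt (\sum_i (a i + b i) ^+ 2) <=
  Num.sqrt (\sum_i a i ^+ 2) + Num.sqrt (\sum_i b i ^+ 2).
Proof.
have sumsq_ge0 (c : I -> R) : 0 <= \sum_i c i ^+ 2.
  by apply: sumr_ge0 => i _; exact: sqr_ge0.
have dot_le : \sum_i a i * b i <=
    Num.sqrt (\sum_i a i ^+ 2) * Num.sqrt (\sum_i b i ^+ 2).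
  rewrite -sqrtrM ?sumsq_ge0 // (le_trans (ler_norm _)) // -sqrtr_sqr.
  exact/ler_wsqrtr/CauchySchwarz_sum.
have sqrD : \sum_i (a i + b i) ^+ 2 =
    \sum_i a i ^+ 2 + 2 * \sum_i a i * b i + \sum_i b i ^+ 2.
  by rewrite mulr_sumr -!big_split; apply: eq_bigr => i _; rewrite sqrrD mulr_natl.
rewrite -(@ler_pXn2r _ 2) ?nnegrE ?addr_ge0 ?sqrtr_ge0 //.
by rewrite sqr_sqrtr ?sumsq_ge0 // sqrD sqrrD !sqr_sqrtr ?sumsq_ge0 //; lra.
Qed.

End Minkowski.

Section Euclidean.
Context {R : realType} {d : nat}.
Implicit Types (x y z v c : 'rV[R]_d) (S : {fset 'rV[R]_d}).

Lemma edist_ge0 x y : 0 <= edist x y.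
Proof. exact: sqrtr_ge0. Qed.

Lemma edistC x y : edist x y = edist y x.
Proof. by rewrite /edist; congr Num.sqrt; apply: eq_bigr => i _; ring. Qed.

Lemma edist_triangle x y z : edist x z <= edist x y + edist y z.
Proof.
rewrite /edist; have -> : \sum_i (x ord0 i - z ord0 i) ^+ 2 =
    \sum_i ((x ord0 i - y ord0 i) + (y ord0 i - z ord0 i)) ^+ 2.
  by apply: eq_bigr => i _; rewrite subrKA.
exact: Minkowski_sum.
Qed.

Lemma dset_le v c S : c \in S -> (dset v S <= (edist v c)%:E)%E.
Proof. by move=> cS; rewrite /dset (big_rem c) //= ge_min lexx. Qed.

End Euclidean.

Local Open Scope fset_scope.

Section Witnesses.
Context {R : realType} {d : nat} (sigma : R).
Implicit Types (v c : 'rV[R]_d) (T : {fset 'rV[R]_d}) (w : 'rV[R]_d -> 'rV[R]_d).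

Record witnessing T w : Prop := Witnessing {
  wit_close : forall c, c \in T -> edist (w c) c <= sigma;
  wit_separated : forall c c', c \in T -> c' \in T -> c != c' ->
    2 * sigma < edist (w c) (w c')
}.

Lemma witnessing0 w : witnessing fset0 w.
Proof. by split=> [c|c c']; rewrite inE. Qed.

Lemma witnessing_sub {T T' w} : T' `<=` T -> witnessing T w -> witnessing T' w.
Proof.
move=> /fsubsetP sub [close sep].
by split=> [c /sub | c c' /sub cT /sub]; [exact: close | exact: sep].
Qed.

Lemma upd_same w c v : upd w c v c = v.
Proof. by rewrite /upd eqxx. Qed.

Lemma upd_other w c v c' : c' != c -> upd w c v c' = w c'.
Proof. by rewrite /upd => /negbTE ->. Qed.

Lemma witnessing_add T w v c :
  witnessing T w -> (forall c', c' \in T -> 3 * sigma < edist v c') ->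
  edist v c <= sigma -> witnessing (c |` T) (upd w c v).
Proof.
move=> [close sep] far vc.
have cT : c \notin T.
  by apply/negP => /far; have := edist_ge0 v c; lra.
have old c' : c' \in T -> upd w c v c' = w c'.
  by move=> c'T; apply: upd_other; apply: contraNneq cT => <-.
have v_far c' : c' \in T -> 2 * sigma < edist v (w c').
  move=> c'T; have := edist_triangle v (w c') c'.
  by have := close _ c'T; have := far _ c'T; lra.
split=> [c'|c1 c2]; rewrite ?in_fset1U.
- by case/predU1P=> [->|c'T]; rewrite ?upd_same ?old // close.
- case/predU1P=> [->|c1T]; case/predU1P=> [->|c2T]; rewrite ?eqxx // => ne.
  + by rewrite upd_same old // v_far.
  + by rewrite upd_same old // edistC v_far.
  + by rewrite !old // sep.
Qed.

Lemma inner_witnessing {V C J T w T' w'} :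
  inner V C J sigma T w T' w' -> witnessing T w -> witnessing T' w'.
Proof.
elim=> {T w T' w'} // T w v c T' w' _ dvT _ _ vc _ IH wT.
apply/IH/witnessing_add => // c' c'T.
by rewrite -lte_fin (lt_le_trans dvT) ?dset_le.
Qed.

Lemma outer_witnessing {V C f T w T' w'} :
  outer V C f sigma T w T' w' -> witnessing T w -> witnessing T' w'.
Proof.
elim=> {T w T' w'} // T w J T1 w1 T' w' _ _ _ inn _ IH wT.
exact/IH/(inner_witnessing inn)/(witnessing_sub (fsubsetDl T J)).
Qed.

End Witnesses.

Theorem lemma20 (R : realType) (d : nat) (V C : {fset 'rV[R]_d}) (k f : nat)
    (sigma : R) :
  (1 <= k)%N ->
  (sigmaf V C f C <= sigma%:E)%E ->
  forall (w0 : 'rV[R]_d -> 'rV[R]_d) (T : {fset 'rV[R]_d}) (wit : 'rV[R]_d -> 'rV[R]_d),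
    outer V C f sigma fset0 w0 T wit ->
    forall c c', c \in T -> c' \in T -> c != c' ->
      2 * sigma < edist (wit c) (wit c').
Proof.
move=> _ _ w0 T wit run.
exact/wit_separated/(outer_witnessing sigma run)/witnessing0.
Qed.
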